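(* Let $(A,\cdot)$ be an associative algebra over a field $\mathbf{k}$ of characteristic $0$ and $N:A\to A$ a Nijenhuis operator on it. For $n\ge1$ define $\Psi_n:\mathrm{Hom}(A^{\otimes n},A)\to\mathrm{Hom}(A^{\otimes n+1},A)$ by $\Psi_n(f)=(-1)^{n+1}\delta_{\mathrm{Hoch}}f$, where $\delta_{\mathrm{Hoch}}$ is the Hochschild coboundary of $(A,\cdot)$ with adjoint coefficients. Then the maps $\Psi_n$ induce a homomorphism $\Psi:H^n(N)\to H^{n+1}_{\mathrm{Hoch}}(A_N;A_N)$, $[f]\mapsto[\Psi_n(f)]$, from the cohomology of the Nijenhuis operator $N$ to the Hochschild cohomology of the deformed associative algebra $A_N$ with coefficients in itself.
   Context: A Nijenhuis operator: linear $N$ with $N(a)N(b)=N(N(a)b+aN(b)-N(ab))$. The deformed algebra is $A_N=(A,\cdot_N)$ with $a\cdot_Nb=N(a)\cdot b+a\cdot N(b)-N(a\cdot b)$ (associative). $(\delta_{\mathrm{Hoch}}f)(a_1,\dots,a_{n+1})=a_1\cdot f(a_2,\dots,a_{n+1})+\sum_{i=1}^n(-1)^if(a_1,\dots,a_i\cdot a_{i+1},\dots,a_{n+1})+(-1)^{n+1}f(a_1,\dots,a_n)\cdot a_{n+1}$. $H^\bullet_{\mathrm{Hoch}}(A_N;A_N)$ is the Hochschild cohomology of $A_N$ with coefficients in the adjoint bimodule (same formula with $\cdot_N$). $H^\bullet(N)$ is the cohomology of $\{\bigoplus_{n\ge0}\mathrm{Hom}(A^{\otimes n},A),d_N\}$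 where for $n\ge1$: $(d_Nf)(a_1,\dots,a_{n+1})=N(a_1)f(a_2,\dots,a_{n+1})-(-1)^nf(a_1,\dots,a_n)N(a_{n+1})+\sum_{i=1}^n(-1)^if(a_1,\dots,a_{i-1},a_i\cdot_Na_{i+1},\dots,a_{n+1})-N\big((\delta_{\mathrm{Hoch}}f)(a_1,\dots,a_{n+1})\big)$, and for $a\in A$: $d_N(a)(b)=N(b)a-aN(b)-N(ba-ab)$. *)

From HB Require Import structures.
From mathcomp Require Import all_boot all_order all_algebra.
Set Implicit Arguments. Unset Strict Implicit. Unset Printing Implicit Defensive.
Import GRing.Theory.
Local Open Scope ring_scope.

(* An n-cochain: a map A^n -> A, arguments indexed by 'I_n (position 0 = a_1). *)
Definition cochain (A : Type) (n : nat) := ('I_n -> A) -> A.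

Section Cochains.
Variables (R : fieldType) (A : lmodType R).

Definition upd n (a : 'I_n -> A) (i : 'I_n) (x : A) : 'I_n -> A :=
  fun j => if j == i then x else a j.

Definition multilinear n (f : cochain A n) : Prop :=
  forall (a : 'I_n -> A) (i : 'I_n) (c : R) (x y : A),
    f (upd a i (c *: x + y)) = c *: f (upd a i x) + f (upd a i y).

Definition ctail n (a : 'I_n.+1 -> A) : 'I_n -> A := fun j => a (lift ord0 j).
Definition cinit n (a : 'I_n.+1 -> A) : 'I_n -> A := fun j => a (widen_ord (leqnSn n) j).
(* (a_1,...,a_{n+1}) |-> (a_1,...,a_i a_{i+1},...,a_{n+1}), with i 0-based *)
Definition contract (mul : A -> A -> A) n (a : 'I_n.+1 -> A) (i : nat) : 'I_n -> A :=
  fun j => if (j < i)%N then a (inord j)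
           else if j == i :> nat then mul (a (inord i)) (a (inord i.+1))
           else a (inord j.+1).

Definition hoch (mul : A -> A -> A) n (f : cochain A n) : cochain A n.+1 :=
  fun a => mul (a ord0) (f (ctail a))
         + \sum_(i < n) ((-1 : R) ^+ i.+1) *: f (contract mul a i)
         + ((-1 : R) ^+ n.+1) *: mul (f (cinit a)) (a ord_max).

Definition mulN (mul : A -> A -> A) (N : A -> A) (a b : A) : A :=
  mul (N a) b + mul a (N b) - N (mul a b).

Definition dN (mul : A -> A -> A) (N : A -> A) n (f : cochain A n) : cochain A n.+1 :=
  fun a => mul (N (a ord0)) (f (ctail a))
         - ((-1 : R) ^+ n) *: mul (f (cinit a)) (N (a ord_max))
         + \sum_(i < n) ((-1 : R) ^+ i.+1) *: f (contract (mulN mul N) a i)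
         - N (hoch mul f a).

Definition dN0 (mul : A -> A -> A) (N : A -> A) (x : A) : cochain A 1 :=
  fun b => mul (N (b ord0)) x - mul x (N (b ord0)) - N (mul (b ord0) x - mul x (b ord0)).

Definition Psi (mul : A -> A -> A) n (f : cochain A n) : cochain A n.+1 :=
  fun a => ((-1 : R) ^+ n.+1) *: hoch mul f a.

Definition isNcobound (mul : A -> A -> A) (N : A -> A) (n : nat) : cochain A n.+1 -> Prop :=
  match n return cochain A n.+1 -> Prop with
  | 0 => fun f => exists x : A, forall b, f b = dN0 mul N x b
  | m.+1 => fun f => exists g : cochain A m.+1,
              multilinear g /\ forall b, f b = dN mul N g b
  end.

End Cochains.

(* Write delta_m = sum_k (-1)^k d_k for the Hochschild coboundary of a bilinear product m,
   with faces d_k.  If m and m' are compatible, i.e.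
   m (m' x y) z + m' (m x y) z = m x (m' y z) + m' x (m y z),
   the simplicial identities for the mixed faces give delta_m delta_m' + delta_m' delta_m = 0.
   For every linear N the product of A and the deformed product of A_N are compatible, and
   d_N f = delta_{A_N} f - delta_A (N o f).  So if d_N f = 0 then
   delta_{A_N} delta_A f = - delta_A delta_{A_N} f = - delta_A delta_A (N o f) = 0, and if
   f = d_N g then delta_A f = delta_A delta_{A_N} g = - delta_{A_N} delta_A g. *)

From HB Require Import structures.
From mathcomp Require Import all_boot all_order all_algebra sesquilinear zify.
From Stdlib Require Import FunctionalExtensionality.
Set Implicit Arguments. Unset Strict Implicit. Unset Printing Implicit Defensive.
Import GRing.Theory.
Local Open Scope ring_scope.

Section AlternatingSum.
Variables (R : pzRingType) (V : lmodType R).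

Lemma alternating_simplicial_sum_eq0 (Z : nat -> nat -> V) n :
  (forall i j, (i < j)%N -> (j <= n)%N -> Z j i = Z i j.-1) ->
  \sum_(j < n.+1) \sum_(i < n) (-1) ^+ (i + j) *: Z j i = 0.
Proof.
elim: n => [|n IHn] hZ; first by rewrite big1 // => j _; rewrite big_ord0.
(* The terms added in passing from n to n.+1, row j = n.+1 and column i = n, cancel. *)
set F := fun j i : nat => (-1) ^+ (i + j) *: Z j i.
have hZn i : (i <= n)%N -> F n.+1 i = - F i n.
  by move=> le_in; rewrite /F hZ //= addnS addnC exprS mulN1r scaleNr.
change (\sum_(j < n.+2) \sum_(i < n.+1) F j i = 0).
have -> : \sum_(j < n.+2) \sum_(i < n.+1) F j i =
          \sum_(j < n.+2) \sum_(i < n) F j i + \sum_(j < n.+2) F j n.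
  by rewrite -big_split; apply: eq_bigr => j _; rewrite big_ord_recr.
rewrite big_ord_recr /= IHn => [|i j lt_ij le_jn]; last by apply: hZ => //; lia.
rewrite add0r !big_ord_recr /= hZn // (eq_bigr (fun i : 'I_n => - F i n)); last first.
  by move=> i _; rewrite hZn // ltnW.
by rewrite sumrN addrK addNr.
Qed.

End AlternatingSum.

Lemma val_inord n k : (inord k : 'I_n.+1) = (if (k < n.+1)%N then k else 0)%N :> nat.
Proof. by case: ltnP => [/inordK //|kn]; rewrite /inord /insubd insubN // -leqNgt. Qed.

Definition updn (T : Type) n (b : 'I_n -> T) (k : nat) (x : T) : 'I_n -> T :=
  fun j => if j == k :> nat then x else b j.

Definition contract3 (T : Type) p (a : 'I_p.+2 -> T) (k : nat) (x : T) : 'I_p -> T :=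
  fun j => if (j < k)%N then a (inord j) else if j == k :> nat then x else a (inord j.+2).

Ltac case_ifs :=
  repeat match goal with |- context [if ?c then _ else _] =>
    lazymatch c with context [if _ then _ else _] => fail | _ => case: (boolP c) => ? end
  end.

Ltac tuple_eq :=
  try (let j := fresh "j" in apply: functional_extensionality => j; have ? := ltn_ord j);
  rewrite /updn /contract3 /ctail /cinit /contract /= ?val_inord /bump /= ?add1n;
  case_ifs; try (exfalso; lia); try done; repeat f_equal;
  try (apply: val_inj; rewrite /= ?val_inord /bump /= ?add1n; case_ifs); lia.

Section Tuples.
Variables (R : fieldType) (A : lmodType R) (p : nat).
Implicit Types (m : A -> A -> A) (a : 'I_p.+2 -> A) (b : 'I_p.+1 -> A).

Lemma ctail_contractS m a k : ctail (contract m a k.+1) = contract m (ctail a) k.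
Proof. tuple_eq. Qed.

Lemma contractS_ord0 m a k : contract m a k.+1 ord0 = a ord0.
Proof. tuple_eq. Qed.

Lemma ctail_contract0 m a : ctail (contract m a 0) = ctail (ctail a).
Proof. tuple_eq. Qed.

Lemma contract0_ord0 m a : contract m a 0 ord0 = m (a ord0) (ctail a ord0).
Proof. tuple_eq. Qed.

Lemma cinit_contract m a k : (k < p)%N -> cinit (contract m a k) = contract m (cinit a) k.
Proof. move=> ?; tuple_eq. Qed.

Lemma contract_ord_max m a k : (k < p)%N -> contract m a k ord_max = a ord_max.
Proof. move=> ?; tuple_eq. Qed.

Lemma cinit_contract_max m a : cinit (contract m a p) = cinit (cinit a).
Proof. tuple_eq. Qed.

Lemma contract_max_ord_max m a : contract m a p ord_max = m (cinit a ord_max) (a ord_max).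
Proof. tuple_eq. Qed.

Lemma ctail_cinit a : ctail (cinit a) = cinit (ctail a).
Proof. tuple_eq. Qed.

Lemma cinit_ord0 a : cinit a ord0 = a ord0.
Proof. tuple_eq. Qed.

Lemma ctail_ord_max a : ctail a ord_max = a ord_max.
Proof. tuple_eq. Qed.

Lemma contract_contract m m' a k l : (k.+1 < l)%N ->
  contract m' (contract m a l) k = contract m (contract m' a k) l.-1.
Proof. move=> ?; tuple_eq. Qed.

Lemma contract_contractS m m' a k : (k < p)%N ->
  contract m' (contract m a k.+1) k =
  contract3 a k (m' (a (inord k)) (m (a (inord k.+1)) (a (inord k.+2)))).
Proof. move=> ?; tuple_eq. Qed.

Lemma contract_contract_same m m' a k : (k < p)%N ->
  contract m' (contract m a k) k =
  contract3 a k (m' (m (a (inord k)) (a (inord k.+1))) (a (inord k.+2))).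
Proof. move=> ?; tuple_eq. Qed.

Lemma contract3_updn a k x y : contract3 a k x = updn (contract3 a k y) k x.
Proof. tuple_eq. Qed.

Lemma ctail_updn0 b x : ctail (updn b 0 x) = ctail b.
Proof. tuple_eq. Qed.

Lemma ctail_updnS b i x : ctail (updn b i.+1 x) = updn (ctail b) i x.
Proof. tuple_eq. Qed.

Lemma contract_updn_lt m b i k x : (i < k)%N ->
  contract m (updn b i x) k = updn (contract m b k) i x.
Proof. move=> ?; tuple_eq. Qed.

Lemma contract_updn_eq m b k x : (k < p)%N ->
  contract m (updn b k x) k = updn (contract m b k) k (m x (b (inord k.+1))).
Proof. move=> ?; tuple_eq. Qed.

Lemma contract_updnS m b k x : (k < p)%N ->
  contract m (updn b k.+1 x) k = updn (contract m b k) k (m (b (inord k)) x).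
Proof. move=> ?; tuple_eq. Qed.

Lemma contract_updn_gt m b i k x : (k.+1 < i)%N ->
  contract m (updn b i x) k = updn (contract m b k) i.-1 x.
Proof. move=> ?; tuple_eq. Qed.

Lemma cinit_updn b i x : (i < p)%N -> cinit (updn b i x) = updn (cinit b) i x.
Proof. move=> ?; tuple_eq. Qed.

Lemma updn_ord_max b i x : (i < p)%N -> updn b i x ord_max = b ord_max.
Proof. move=> ?; tuple_eq. Qed.

Lemma cinit_updn_max b x : cinit (updn b p x) = cinit b.
Proof. tuple_eq. Qed.

Lemma updn_max_ord_max b x : updn b p x ord_max = x.
Proof. tuple_eq. Qed.

End Tuples.

Section Faces.
Variables (R : fieldType) (A : lmodType R).
Implicit Types m : A -> A -> A.

Definition face m n (k : nat) (f : cochain A n) : cochain A n.+1 := fun a =>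
  if k == 0%N then m (a ord0) (f (ctail a))
  else if (k <= n)%N then f (contract m a k.-1)
  else m (f (cinit a)) (a ord_max).

Lemma face0 m n (f : cochain A n) a : face m 0 f a = m (a ord0) (f (ctail a)).
Proof. by []. Qed.

Lemma faceS m n (f : cochain A n) a k : (k < n)%N -> face m k.+1 f a = f (contract m a k).
Proof. by rewrite /face /= => ->. Qed.

Lemma face_max m n (f : cochain A n) a : face m n.+1 f a = m (f (cinit a)) (a ord_max).
Proof. by rewrite /face /= ltnn. Qed.

Lemma hoch_faceE m n (f : cochain A n) a :
  hoch m f a = \sum_(k < n.+2) (-1) ^+ k *: face m k f a.
Proof.
rewrite big_ord_recl big_ord_recr /= expr0 scale1r face0 face_max /hoch -!addrA.
by congr (_ + (_ + _)); apply: eq_bigr => i _; rewrite /= /bump /= add1n faceS.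
Qed.

Lemma eq_hoch m n (f g : cochain A n) : f =1 g -> hoch m f =1 hoch m g.
Proof. by move=> /functional_extensionality ->. Qed.

Section BilinearFaces.
Variable m : {bilinear A -> A -> A}.

Lemma face_linear n k (a : 'I_n.+1 -> A) :
  exists (L : {linear A -> A}) (b : 'I_n -> A), forall f : cochain A n, face m k f a = L (f b).
Proof.
rewrite /face; case: (k == 0%N); first by exists (m (a ord0)), (ctail a).
by case: (k <= n)%N; [exists idfun, (contract m a k.-1) | exists (applyr m (a ord_max)), (cinit a)].
Qed.

Lemma hochZ n c (f : cochain A n) a : hoch m (fun b => c *: f b) a = c *: hoch m f a.
Proof.
rewrite !hoch_faceE scaler_sumr; apply: eq_bigr => k _.
have [L [b E]] := face_linear k a.
by rewrite !E linearZ scalerA mulrC -scalerA.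
Qed.

Lemma hochB n (f g : cochain A n) a :
  hoch m (fun b => f b - g b) a = hoch m f a - hoch m g a.
Proof.
rewrite !hoch_faceE -sumrB; apply: eq_bigr => k _.
have [L [b E]] := face_linear k a.
by rewrite !E linearB scalerBr.
Qed.

Lemma hoch_hochE m' n (g : cochain A n) a :
  hoch m (hoch m' g) a =
  \sum_(j < n.+3) \sum_(i < n.+2) (-1) ^+ (i + j) *: face m j (face m' i g) a.
Proof.
rewrite hoch_faceE; apply: eq_bigr => j _.
have [L [b E]] := face_linear j a.
rewrite E hoch_faceE linear_sum scaler_sumr; apply: eq_bigr => i _.
by rewrite linearZ E scalerA -exprD addnC.
Qed.

End BilinearFaces.
End Faces.

Section Multilinear.
Variables (R : fieldType) (A : lmodType R).

Definition multilinearn n (g : cochain A n) := forall b k c x y, (k < n)%N ->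
  g (updn b k (c *: x + y)) = c *: g (updn b k x) + g (updn b k y).

Lemma multilinearP n (g : cochain A n) : multilinear g <-> multilinearn g.
Proof.
split=> [hg b k c x y lt_kn | hg b i c x y]; last exact: hg (ltn_ord i).
exact: (hg b (Ordinal lt_kn)).
Qed.

Lemma multilinearnD n (g : cochain A n) b k x y : multilinearn g -> (k < n)%N ->
  g (updn b k (x + y)) = g (updn b k x) + g (updn b k y).
Proof. by move=> hg lt_kn; have := hg b k 1 x y lt_kn; rewrite !scale1r. Qed.

Lemma multilinearnZ n c (g : cochain A n) : multilinearn g -> multilinearn (fun b => c *: g b).
Proof. by move=> hg b k c' x y lt_kn; rewrite hg // scalerDr !scalerA mulrC. Qed.

Lemma multilinearn_comp (L : {linear A -> A}) n (g : cochain A n) :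
  multilinearn g -> multilinearn (fun b => L (g b)).
Proof. by move=> hg b k c x y lt_kn; rewrite hg // linearP. Qed.

Lemma face_multilinear (m : {bilinear A -> A -> A}) n k (g : cochain A n) :
  multilinearn g -> multilinearn (face m k g).
Proof.
move=> hg b i c x y lt_in; rewrite /face.
case: ifP => [_|k_neq0].
  case: i lt_in => [|i] lt_in; first by rewrite !ctail_updn0 /updn /= linearPl.
  by rewrite !ctail_updnS hg // /updn /= linearPr.
case: ifP => le_kn.
  have lt_kn : (k.-1 < n)%N by move/negbT: k_neq0; lia.
  have [lt_ik|gt_ik|->] := ltngtP i k.-1.
  - by rewrite !contract_updn_lt // hg //; lia.
  - case: (eqVneq i k.-1.+1) => [->|ne_ik]; first by rewrite !contract_updnS // linearPr hg.
    by rewrite !contract_updn_gt ?hg //; lia.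
  - by rewrite !contract_updn_eq // linearPl hg.
case: (ltnP i n) => [lt_in'|ge_in].
  by rewrite !cinit_updn // !updn_ord_max // hg // linearPl.
have -> : i = n by lia.
by rewrite !cinit_updn_max !updn_max_ord_max linearPr.
Qed.

Lemma hoch_multilinear (m : {bilinear A -> A -> A}) n (g : cochain A n) :
  multilinearn g -> multilinearn (hoch m g).
Proof.
move=> hg b i c x y lt_in; rewrite !hoch_faceE scaler_sumr -big_split.
apply: eq_bigr => k _; rewrite face_multilinear //.
by rewrite scalerDr !scalerA mulrC.
Qed.

End Multilinear.

Section SimplicialIdentities.
Variables (R : fieldType) (A : lmodType R).

Definition compatible (m m' : A -> A -> A) := forall x y z,
  m (m' x y) z + m' (m x y) z = m x (m' y z) + m' x (m y z).

Variables (m m' : A -> A -> A) (n : nat) (g : cochain A n) (a : 'I_n.+2 -> A).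

Lemma face_faceC i j : (i.+1 < j)%N -> (j <= n.+2)%N -> (0 < i)%N || (j <= n.+1)%N ->
  face m j (face m' i g) a = face m' i (face m j.-1 g) a.
Proof.
case: j => [|[|l]] //= lt_ij le_jn hij.
case: i lt_ij hij => [|i] lt_ij hij.
  have lt_ln : (l < n)%N by lia.
  by rewrite faceS // face0 contractS_ord0 ctail_contractS face0 faceS.
have lt_in : (i < n)%N by lia.
rewrite [RHS]faceS; last exact: ltnW.
case: (ltnP l n) => [lt_ln|ge_ln].
  by rewrite !faceS // contract_contract.
have -> : l = n by lia.
by rewrite face_max faceS // face_max cinit_contract // contract_ord_max.
Qed.

Hypothesis m_m'_compatible : compatible m m'.

Lemma face_face_first :
  face m 1 (face m' 0 g) a + face m' 1 (face m 0 g) a =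
  face m 0 (face m' 0 g) a + face m' 0 (face m 0 g) a.
Proof.
rewrite !faceS // !face0 !ctail_contract0 !contract0_ord0.
by rewrite addrC m_m'_compatible.
Qed.

Lemma face_face_ends :
  face m n.+2 (face m' 0 g) a + face m' n.+2 (face m 0 g) a =
  face m 0 (face m' n.+1 g) a + face m' 0 (face m n.+1 g) a.
Proof.
rewrite !face_max !face0 !face_max.
by rewrite !ctail_cinit !cinit_ord0 !ctail_ord_max m_m'_compatible.
Qed.

Lemma face_face_last :
  face m n.+2 (face m' n.+1 g) a + face m' n.+2 (face m n.+1 g) a =
  face m n.+1 (face m' n.+1 g) a + face m' n.+1 (face m n.+1 g) a.
Proof.
rewrite !face_max [face m n.+1 (face m' _ _) a]faceS ?ltnSn //.
rewrite [face m' n.+1 (face m _ _) a]faceS ?ltnSn // !face_max.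
by rewrite !cinit_contract_max !contract_max_ord_max m_m'_compatible addrC.
Qed.

Lemma face_face_adjacent k : multilinearn g -> (k < n)%N ->
  face m k.+2 (face m' k.+1 g) a + face m' k.+2 (face m k.+1 g) a =
  face m k.+1 (face m' k.+1 g) a + face m' k.+1 (face m k.+1 g) a.
Proof.
move=> hg lt_kn.
have contract3D x y : g (contract3 a k (x + y)) = g (contract3 a k x) + g (contract3 a k y).
  rewrite (contract3_updn a k (x + y) 0) (contract3_updn a k x 0) (contract3_updn a k y 0).
  exact: multilinearnD.
rewrite !faceS ?contract_contractS ?contract_contract_same //; try lia.
by rewrite -!contract3D addrC -m_m'_compatible addrC.
Qed.

End SimplicialIdentities.

Section Anticommutation.
Variables (R : fieldType) (A : lmodType R).

Lemma face_face_compatible (m m' : A -> A -> A) n (g : cochain A n) a i j :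
  compatible m m' -> multilinearn g -> (i < j)%N -> (j <= n.+2)%N ->
  face m j (face m' i g) a + face m' j (face m i g) a =
  face m i (face m' j.-1 g) a + face m' i (face m j.-1 g) a.
Proof.
move=> hc hg lt_ij le_jn.
case: (ltnP i.+1 j) => [lt_Sij|le_jSi].
  case: (boolP ((0 < i)%N || (j <= n.+1)%N)) => [hij|].
    by rewrite (face_faceC m m' _ _ lt_Sij) ?(face_faceC m' m _ _ lt_Sij) // addrC.
  rewrite negb_or -eqn0Ngt -ltnNge => /andP [/eqP-> lt_nj].
  have -> : j = n.+2 by lia.
  exact: face_face_ends.
move: le_jn; have {lt_ij le_jSi} -> : j = i.+1 by lia.
case: i => [|k] le_kn; first exact: face_face_first.
case: (ltnP k n) => [lt_kn|ge_kn]; first exact: face_face_adjacent.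
have -> : k = n by lia.
exact: face_face_last.
Qed.

Lemma hoch_anticomm (m m' : {bilinear A -> A -> A}) n (g : cochain A n) a :
  compatible m m' -> multilinearn g ->
  hoch m (hoch m' g) a + hoch m' (hoch m g) a = 0.
Proof.
move=> hc hg; rewrite !hoch_hochE -big_split /=.
under eq_bigr do rewrite -big_split /=.
under eq_bigr do under eq_bigr do rewrite -scalerDr.
apply: (alternating_simplicial_sum_eq0
  (Z := fun j i => face m j (face m' i g) a + face m' j (face m i g) a)).
by move=> i j; apply: face_face_compatible.
Qed.

(* delta_m delta_m = 0 is the case m = m' of anticommutation, which only yields twice it. *)
Lemma hoch_hoch_eq0 (m : {bilinear A -> A -> A}) n (g : cochain A n) a :
  2%:R != 0 :> R -> associative m -> multilinearn g -> hoch m (hoch m g) a = 0.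
Proof.
move=> two_neq0 mA hg.
have m_m_compatible : compatible m m by move=> x y z; rewrite !mA.
have /eqP := hoch_anticomm a m_m_compatible hg.
by rewrite -mulr2n -scaler_nat scaler_eq0 (negbTE two_neq0) => /eqP.
Qed.

End Anticommutation.

(* Identities between signed sums in a zmodType that hold once opposite summands cancel:
   flatten, cancel the pairs x and - x, then match the remaining summands one by one. *)
Ltac zmod_ac :=
  rewrite ?opprD ?opprK ?addrA;
  repeat match goal with |- context [(_ - ?x)%R] =>
    progress (try rewrite ?(addrAC _ x) ?(addrAC _ (- x)) addrK) end;
  apply: (@addrI _ 0); rewrite ?addrA;
  repeat match goal with |- _ = _ + ?y => rewrite ?(addrAC _ y); congr (_ + _) end.

Section NijenhuisDeformation.
Variables (R : fieldType) (A : lmodType R).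
Variables (mul : {bilinear A -> A -> A}) (N : {linear A -> A}).

Lemma mulN_bilinear : bilinear_for *:%R *:%R (mulN mul N).
Proof.
have mulN_linearl z : linear (mulN mul N ^~ z).
  move=> c x y; rewrite /mulN !linearPl !(linearP N) !linearPl scalerBr scalerDr.
  zmod_ac.
have mulN_linearr z : linear (mulN mul N z).
  move=> c x y; rewrite /mulN !linearPr !(linearP N) !linearPr scalerBr scalerDr.
  zmod_ac.
by split; [exact: mulN_linearl | exact: mulN_linearr].
Qed.

Lemma compatible_mul_mulN : associative mul -> compatible mul (mulN mul N).
Proof.
by move=> mulA x y z; rewrite /mulN linearBl linearDl linearBr linearDr !mulA; zmod_ac.
Qed.

Lemma N_hochE n (g : cochain A n) b :
  N (hoch mul g b) = N (mul (b ord0) (g (ctail b))) +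
    \sum_(i < n) (-1) ^+ i.+1 *: N (g (contract mul b i)) +
    (-1) ^+ n.+1 *: N (mul (g (cinit b)) (b ord_max)).
Proof.
rewrite /hoch !raddfD raddf_sum; congr (_ + _ + _); last exact: linearZ.
by apply: eq_bigr => i _; exact: linearZ.
Qed.

Lemma dN_hochE n (g : cochain A n) b :
  dN mul N g b = hoch (mulN mul N) g b - hoch mul (fun c => N (g c)) b.
Proof.
rewrite /dN N_hochE /hoch /mulN !scalerBr !scalerDr exprS mulN1r !scaleNr.
zmod_ac.
Qed.

Lemma dN0_hochE x b :
  dN0 mul N x b =
  hoch (mulN mul N) (fun _ : 'I_0 -> A => x) b - hoch mul (fun _ : 'I_0 -> A => N x) b.
Proof.
rewrite /dN0 /hoch /= !big_ord0 !addr0 expr1 !scaleN1r /mulN linearB.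
have -> : (ord_max : 'I_1) = ord0 by apply: val_inj.
zmod_ac.
Qed.

HB.instance Definition _ :=
  bilinear_isBilinear.Build R A A A *:%R *:%R (mulN mul N) mulN_bilinear.

Hypotheses (mulA : associative mul) (two_neq0 : 2%:R != 0 :> R).

Lemma hoch_mulN_hoch_mul n (g : cochain A n) a : multilinearn g ->
  hoch (mulN mul N) (hoch mul g) a = - hoch mul (hoch (mulN mul N) g) a.
Proof.
move=> hg; apply/eqP; rewrite -addr_eq0 addrC.
exact/eqP/hoch_anticomm/hg/compatible_mul_mulN.
Qed.

Lemma Psi_cocycle n (f : cochain A n) : multilinearn f ->
  (forall a, dN mul N f a = 0) -> forall a, hoch (mulN mul N) (Psi mul f) a = 0.
Proof.
move=> hf dNf0 a.
have hochN_f : hoch (mulN mul N) f =1 hoch mul (fun b => N (f b)).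
  by move=> b; apply/eqP; rewrite -subr_eq0 -dN_hochE dNf0.
rewrite /Psi hochZ hoch_mulN_hoch_mul // (eq_hoch _ hochN_f).
by rewrite (hoch_hoch_eq0 _ two_neq0 mulA (multilinearn_comp N hf)) oppr0 scaler0.
Qed.

Lemma Psi_coboundary n (g : cochain A n) (f : cochain A n.+1) : multilinearn g ->
  f =1 (fun b => hoch (mulN mul N) g b - hoch mul (fun c => N (g c)) b) ->
  exists h : cochain A n.+1, multilinearn h /\ Psi mul f =1 hoch (mulN mul N) h.
Proof.
move=> hg ef; exists (fun b => (-1) ^+ n.+1 *: hoch mul g b).
split; first exact/multilinearnZ/hoch_multilinear.
move=> a; rewrite /Psi (eq_hoch _ ef) hochB.
rewrite (hoch_hoch_eq0 _ two_neq0 mulA (multilinearn_comp N hg)) subr0.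
by rewrite hochZ hoch_mulN_hoch_mul // exprS mulN1r scaleNr scalerN.
Qed.

End NijenhuisDeformation.

Theorem theorem2p17 (R : fieldType) (A : lmodType R) (mul : A -> A -> A) (N : A -> A)
  (charR0 : [pchar R] =i pred0)
  (mul_linl : forall (c : R) (x y z : A), mul (c *: x + y) z = c *: mul x z + mul y z)
  (mul_linr : forall (c : R) (x y z : A), mul z (c *: x + y) = c *: mul z x + mul z y)
  (mulA : forall x y z : A, mul x (mul y z) = mul (mul x y) z)
  (N_lin : forall (c : R) (x y : A), N (c *: x + y) = c *: N x + N y)
  (N_nij : forall x y : A, mul (N x) (N y) = N (mul (N x) y + mul x (N y) - N (mul x y)))
  (n : nat) :
  (* Psi_{n+1} maps d_N-cocycles to Hochschild cocycles of A_N ... *)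
  (forall f : cochain A n.+1, multilinear f ->
     (forall a, dN mul N f a = 0) ->
     forall a, hoch (mulN mul N) (Psi mul f) a = 0) /\
  (* ... and d_N-coboundaries to Hochschild coboundaries of A_N *)
  (forall f : cochain A n.+1, isNcobound mul N f ->
     exists h : cochain A n.+1, multilinear h /\
       forall a, Psi mul f a = hoch (mulN mul N) h a).
Proof.
pose mulB : {bilinear A -> A -> A} := HB.pack mul (bilinear_isBilinear.Build _ _ _ _ _ _ mul
  (fun z c x y => mul_linl c x y z, fun z c x y => mul_linr c x y z)).
pose NL : {linear A -> A} := HB.pack N (GRing.isLinear.Build _ _ _ _ N N_lin).
have two_neq0 : 2%:R != 0 :> R by rewrite ((pcharf0P R).1 charR0 2).
split=> [f /multilinearP hf dNf0 | f].
  exact: (Psi_cocycle (mul := mulB) (N := NL) mulA two_neq0 hf dNf0).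
case: n f => [|n] f.
  case=> x dN0x.
  have hx : multilinearn (fun _ : 'I_0 -> A => x) by move=> b k c y z; rewrite ltn0.
  have [h [/multilinearP hh Psi_h]] := Psi_coboundary (mul := mulB) (N := NL) mulA two_neq0 hx
    (fun b => etrans (dN0x b) (dN0_hochE mulB NL x b)).
  by exists h.
case=> g [/multilinearP hg dNg].
have [h [/multilinearP hh Psi_h]] := Psi_coboundary (mul := mulB) (N := NL) mulA two_neq0 hg
  (fun b => etrans (dNg b) (dN_hochE mulB NL g b)).
by exists h.
Qed.
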